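(* (Preservation for $\lambda_{\mathrm{act}}$ terms.) If $\Gamma \mid B \vdash M : A$ and $M \longrightarrow_{\mathsf{M}} M'$, then $\Gamma \mid B \vdash M' : A$.
   Context: The calculus $\lambda_{\mathrm{act}}$ (a fine-grain call-by-value concurrent $\lambda$-calculus with typed actors). Types: $A,B,C ::= \mathbf{1} \mid A \xrightarrow{C} B \mid \mathsf{ActorRef}(A)$ (the annotation $C$ on a function arrow is the mailbox type of the actor evaluating the function body). $\alpha$ ranges over variables $x$ and names $a$. Values $V,W ::= \alpha \mid \lambda x.M \mid ()$. Computations $M,N ::= V\,W \mid \mathbf{let}\ x \Leftarrow M\ \mathbf{in}\ N \mid \mathbf{return}\ V \mid \mathbf{spawn}\ M \mid \mathbf{send}\ V\ W \mid \mathbf{receive} \mid \mathbf{self}$. Value typing $\Gamma\vdash V:A$: $\Gamma\vdash\alpha:A$ if $\alpha:A\in\Gamma$; $\Gamma\vdash\lambda x.M : A\xrightarrow{C}B$ if $\Gamma,x:A\mid C\vdash M:B$; $\Gamma\vdash():\mathbf 1$. Computation typing $\Gamma\mid C\vdash M:A$: $\Gamma\mid C\vdash V\,W:B$ if $\Gamma\vdash V:A\xrightarrow{C}B$ and $\Gamma\vdash W:A$; $\Gamma\mid C\vdash\mathbf{let}\ x \Leftarrow M\ \mathbf{in}\ N : B$ if $\Gamma\mid C\vdash M:A$ and $\Gamma,x:A\mid C\vdash N:B$; $\Gamma\mid C\vdash \mathbf{return}\ V:A$ if $\Gamma\vdash V:A$; $\Gamma\mid C\vdash\mathbf{send}\ V\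 W:\mathbf 1$ if $\Gamma\vdash V:A$ and $\Gamma\vdash W:\mathsf{ActorRef}(A)$; $\Gamma\mid A\vdash\mathbf{receive}:A$; $\Gamma\mid C\vdash\mathbf{spawn}\ M:\mathsf{ActorRef}(A)$ if $\Gamma\mid A\vdash M:\mathbf 1$; $\Gamma\mid A\vdash\mathbf{self}:\mathsf{ActorRef}(A)$. Evaluation contexts $E ::= [\,] \mid \mathbf{let}\ x \Leftarrow E\ \mathbf{in}\ M$. Term reduction $\longrightarrow_{\mathsf{M}}$: $(\lambda x.M)V\longrightarrow_{\mathsf{M}} M\{V/x\}$; $\mathbf{let}\ x \Leftarrow \mathbf{return}\ V\ \mathbf{in}\ M \longrightarrow_{\mathsf{M}} M\{V/x\}$; $E[M]\longrightarrow_{\mathsf{M}} E[M']$ if $M\longrightarrow_{\mathsf{M}} M'$. *)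

(* The calculus lambda_act (fine-grain call-by-value concurrent
   lambda-calculus with typed actors), with variables in de Bruijn form and
   names (actor references) as separate atoms. *)
From Stdlib Require Import List Arith.
Import ListNotations.

Inductive ty : Type :=
| TUnit : ty
| TFun : ty -> ty -> ty -> ty      (* TFun A C B  =  A -C-> B *)
| TRef : ty -> ty.

Inductive val : Type :=
| VVar : nat -> val
| VName : nat -> val
| VLam : comp -> val
| VUnit : val
with comp : Type :=
| CApp : val -> val -> comp
| CLet : comp -> comp -> comp       (* let x <= M in N (binds index 0 in N) *)
| CRet : val -> comp
| CSpawn : comp -> comp
| CSend : val -> val -> comp
| CReceive : comp
| CSelf : comp.

Fixpoint shift_v (d c : nat) (v : val) : val :=
  match v with
  | VVar n => if n <? c then VVar n else VVar (n + d)
  | VName a => VName a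
  | VLam M => VLam (shift_c d (S c) M)
  | VUnit => VUnit
  end
with shift_c (d c : nat) (M : comp) : comp :=
  match M with
  | CApp V W => CApp (shift_v d c V) (shift_v d c W)
  | CLet M N => CLet (shift_c d c M) (shift_c d (S c) N)
  | CRet V => CRet (shift_v d c V)
  | CSpawn M => CSpawn (shift_c d c M)
  | CSend V W => CSend (shift_v d c V) (shift_v d c W)
  | CReceive => CReceive
  | CSelf => CSelf
  end.

(* Capture-avoiding substitution of s for variable k (under k binders),
   removing that variable from the context. *)
Fixpoint subst_v (k : nat) (s : val) (v : val) : val :=
  match v with
  | VVar n => if n <? k then VVar n
              else if n =? k then shift_v k 0 s
              else VVar (pred n)
  | VName a => VName a
  | VLam M => VLam (subst_c (S k) s M)
  | VUnit => VUnit
  end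
with subst_c (k : nat) (s : val) (M : comp) : comp :=
  match M with
  | CApp V W => CApp (subst_v k s V) (subst_v k s W)
  | CLet M N => CLet (subst_c k s M) (subst_c (S k) s N)
  | CRet V => CRet (subst_v k s V)
  | CSpawn M => CSpawn (subst_c k s M)
  | CSend V W => CSend (subst_v k s V) (subst_v k s W)
  | CReceive => CReceive
  | CSelf => CSelf
  end.

Definition subst0 (V : val) (M : comp) : comp := subst_c 0 V M.

(* Typing environments Gamma: G types the variables (index 0 = most recent),
   D types the names. *)
Inductive has_type_v (G : list ty) (D : list ty) : val -> ty -> Prop :=
| T_Var : forall n A, nth_error G n = Some A -> has_type_v G D (VVar n) A
| T_Name : forall a A, nth_error D a = Some A -> has_type_v G D (VName a) A
| T_Lam : forall M A C B,
    has_type_c (A :: G) D C M B -> has_type_v G D (VLam M) (TFun A C B)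
| T_Unit : has_type_v G D VUnit TUnit
with has_type_c (G : list ty) (D : list ty) : ty -> comp -> ty -> Prop :=
| T_App : forall C V W A B,
    has_type_v G D V (TFun A C B) -> has_type_v G D W A ->
    has_type_c G D C (CApp V W) B
| T_Let : forall C M N A B,
    has_type_c G D C M A -> has_type_c (A :: G) D C N B ->
    has_type_c G D C (CLet M N) B
| T_Ret : forall C V A,
    has_type_v G D V A -> has_type_c G D C (CRet V) A
| T_Send : forall C V W A,
    has_type_v G D V A -> has_type_v G D W (TRef A) ->
    has_type_c G D C (CSend V W) TUnit
| T_Receive : forall A, has_type_c G D A CReceive A
| T_Spawn : forall C M A,
    has_type_c G D A M TUnit -> has_type_c G D C (CSpawn M) (TRef A)
| T_Self : forall A, has_type_c G D A CSelf (TRef A).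

Inductive step : comp -> comp -> Prop :=
| S_Beta : forall M V, step (CApp (VLam M) V) (subst0 V M)
| S_LetRet : forall V M, step (CLet (CRet V) M) (subst0 V M)
| S_Ctx : forall M M' N, step M M' -> step (CLet M N) (CLet M' N).

From Stdlib Require Import List Arith Lia.
Import ListNotations.

(* Preservation is the usual consequence of a substitution lemma: a beta step
   and a [let]/[return] step both replace the bound variable by a value typed in
   the remaining context, and the congruence rule is the induction hypothesis.
   Values are typed without a mailbox type, so substituting a value never
   interacts with the mailbox annotation [C] of the surrounding computation.
   Substitution under binders shifts the substituted value, so it rests in turn
   on weakening by an inserted block of variables. *)

Scheme has_type_v_min := Minimality for has_type_v Sort Prop
  with has_type_c_min := Minimality for has_type_c Sort Prop.
Combined Scheme has_type_mutind from has_type_v_min, has_type_c_min.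

Lemma nth_error_app_insert (G1 Gd G2 : list ty) (n : nat) :
  length G1 <= n ->
  nth_error (G1 ++ Gd ++ G2) (n + length Gd) = nth_error (G1 ++ G2) n.
Proof.
  intros Hn. rewrite !nth_error_app2 by lia. f_equal. lia.
Qed.

Lemma shift_typing (G D : list ty) :
  (forall v A, has_type_v G D v A ->
     forall G1 G2 Gd, G = G1 ++ G2 ->
     has_type_v (G1 ++ Gd ++ G2) D (shift_v (length Gd) (length G1) v) A) /\
  (forall C M A, has_type_c G D C M A ->
     forall G1 G2 Gd, G = G1 ++ G2 ->
     has_type_c (G1 ++ Gd ++ G2) D C (shift_c (length Gd) (length G1) M) A).
Proof.
  revert G D; apply has_type_mutind; intros G D.
  - intros n A Hn G1 G2 Gd ->; simpl.
    destruct (Nat.ltb_spec n (length G1)); constructor.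
    + rewrite nth_error_app1 in * by lia. assumption.
    + rewrite nth_error_app_insert by lia. assumption.
  - intros a A Ha G1 G2 Gd ->. now constructor.
  - intros M A C B _ IH G1 G2 Gd ->. constructor. now apply (IH (A :: G1)).
  - intros G1 G2 Gd ->. constructor.
  - intros C V W A B _ IHV _ IHW G1 G2 Gd ->. econstructor; eauto.
  - intros C M N A B _ IHM _ IHN G1 G2 Gd ->.
    econstructor; eauto. now apply (IHN (A :: G1)).
  - intros C V A _ IH G1 G2 Gd ->. constructor; eauto.
  - intros C V W A _ IHV _ IHW G1 G2 Gd ->. econstructor; eauto.
  - intros A G1 G2 Gd ->. constructor.
  - intros C M A _ IH G1 G2 Gd ->. constructor; eauto.
  - intros A G1 G2 Gd ->. constructor.
Qed.

Lemma shift_front_typing (G1 G2 D : list ty) (s : val) (U : ty) :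
  has_type_v G2 D s U -> has_type_v (G1 ++ G2) D (shift_v (length G1) 0 s) U.
Proof.
  intros Hs. exact (proj1 (shift_typing G2 D) s U Hs [] G2 G1 eq_refl).
Qed.

Lemma subst_var_typing (G1 G2 D : list ty) (U A : ty) (s : val) (n : nat) :
  nth_error (G1 ++ U :: G2) n = Some A -> has_type_v G2 D s U ->
  has_type_v (G1 ++ G2) D (subst_v (length G1) s (VVar n)) A.
Proof.
  intros Hn Hs. simpl.
  destruct (Nat.ltb_spec n (length G1)).
  { constructor. rewrite nth_error_app1 in * by lia. assumption. }
  rewrite nth_error_app2 in Hn by lia.
  destruct (Nat.eqb_spec n (length G1)) as [-> | Hne].
  - rewrite Nat.sub_diag in Hn. injection Hn as <-.
    now apply shift_front_typing.
  - constructor. rewrite nth_error_app2 by lia.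
    destruct (n - length G1) as [| k] eqn:Hk; [lia |].
    replace (pred n - length G1) with k by lia. exact Hn.
Qed.

Lemma subst_typing (G D : list ty) :
  (forall v A, has_type_v G D v A ->
     forall G1 U G2 s, G = G1 ++ U :: G2 -> has_type_v G2 D s U ->
     has_type_v (G1 ++ G2) D (subst_v (length G1) s v) A) /\
  (forall C M A, has_type_c G D C M A ->
     forall G1 U G2 s, G = G1 ++ U :: G2 -> has_type_v G2 D s U ->
     has_type_c (G1 ++ G2) D C (subst_c (length G1) s M) A).
Proof.
  revert G D; apply has_type_mutind; intros G D.
  - intros n A Hn G1 U G2 s -> Hs. eapply subst_var_typing; eassumption.
  - intros a A Ha G1 U G2 s -> Hs. now constructor.
  - intros M A C B _ IH G1 U G2 s -> Hs. constructor. now apply (IH (A :: G1) U).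
  - intros G1 U G2 s -> Hs. constructor.
  - intros C V W A B _ IHV _ IHW G1 U G2 s -> Hs. econstructor; eauto.
  - intros C M N A B _ IHM _ IHN G1 U G2 s -> Hs.
    econstructor; eauto. now apply (IHN (A :: G1) U).
  - intros C V A _ IH G1 U G2 s -> Hs. constructor; eauto.
  - intros C V W A _ IHV _ IHW G1 U G2 s -> Hs. econstructor; eauto.
  - intros A G1 U G2 s -> Hs. constructor.
  - intros C M A _ IH G1 U G2 s -> Hs. constructor; eauto.
  - intros A G1 U G2 s -> Hs. constructor.
Qed.

Lemma subst0_typing (G D : list ty) (C U A : ty) (M : comp) (s : val) :
  has_type_c (U :: G) D C M A -> has_type_v G D s U ->
  has_type_c G D C (subst0 s M) A.
Proof.
  intros HM Hs. exact (proj2 (subst_typing (U :: G) D) C M A HM [] U G s eq_refl Hs).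
Qed.

Theorem lemma9 : forall (G D : list ty) (B : ty) (M M' : comp) (A : ty),
  has_type_c G D B M A -> step M M' -> has_type_c G D B M' A.
Proof.
  intros G D B M M' A HM Hstep. revert A HM.
  induction Hstep as [M V | V M | M M' N Hstep IH]; intros T HM; inversion HM; subst.
  - match goal with Hf : has_type_v _ _ (VLam _) _ |- _ => inversion Hf; subst end.
    eapply subst0_typing; eassumption.
  - match goal with HV : has_type_c _ _ _ (CRet _) _ |- _ => inversion HV; subst end.
    eapply subst0_typing; eassumption.
  - econstructor; eauto.
Qed.
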